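(* There is $\alpha_0>0$ such that for every $\alpha\in(0,\alpha_0]$ with $1/\alpha\in\mathbb{N}$ there is $\vartheta_0>0$ such that for every $0<\vartheta\leq\vartheta_0$ there is $n_0$ such that for all $n\geq n_0$ the following holds. Let $H=([n],E)$ be a $3$-uniform hypergraph with $d(i,j)\geq\min\left(i,j,\frac{n}{2}\right)+\alpha n$ for all $\{i,j\}\in[n]^{(2)}$, and let $\mathcal{R}\subseteq[n]$ be a set with $\frac{\vartheta^2}{2}n\leq|\mathcal{R}|\leq\vartheta^2 n$ such that, for some positive integer $L$, for all disjoint ordered pairs of distinct vertices $(x,y),(w,z)\in[n]^2$ there are at least $\vartheta|\mathcal{R}|^{L-2}/2$ tight paths of length $L$ in $H$ connecting $(x,y)$ and $(w,z)$ with all internal vertices in $\mathcal{R}$. Then for every $x\in[n]$, the number of $(x,\alpha)$-absorbers lying in $([n]\setminus\mathcal{R})^{4s(\alpha)}$ is at least $\left(\frac{\alpha n}{3}\right)^{4s(\alpha)}$, where $s(\alpha)=2/\alpha$.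
   Context: Vertices are the integers $[n]$, compared as integers. $d(v,w)=|\{x:\{v,w,x\}\in E\}|$ is the pair degree. A tight path of length $\ell$ is a 3-graph on distinct vertices $x_1,\dots,x_{\ell+2}$ with edges $x_ix_{i+1}x_{i+2}$, $i\in[\ell]$; we write it as the vertex sequence $x_1x_2\dots x_{\ell+2}$; it connects $(x_1,x_2)$ and $(x_{\ell+1},x_{\ell+2})$ and has internal vertices $x_3,\dots,x_\ell$. Absorber: with $s=s(\alpha)=2/\alpha$ (an even integer), for $x\in[n]$ a $4s$-tuple $(v_1,w_1,y_1,z_1,\dots,v_s,w_s,y_s,z_s)\in[n]^{4s}$ of distinct vertices is an $(x,\alpha)$-absorber in $H$ if (1) $v_1w_1xy_1z_1$ is a tight path in $H$; (2) for each $i\in[s-1]$, $v_iw_iy_{i+1}z_{i+1}$ and $v_{i+1}w_{i+1}y_iz_i$ are tight paths in $H$; (3) $v_sw_sy_sz_s$ is a tight path in $H$. *)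

From HB Require Import structures.
From mathcomp Require Import all_boot all_order all_algebra.
From mathcomp Require Import reals.
Set Implicit Arguments. Unset Strict Implicit. Unset Printing Implicit Defensive.
Import Order.TTheory GRing.Theory Num.Theory.

(* Vertex set [n] = {1,...,n} is represented by 'I_n : the ordinal i stands
   for the vertex i+1 (the integer value is used only in the degree
   condition, where we write (i+1)). *)

Section Hyp.
Variable n : nat.
Implicit Types (E : {set {set 'I_n}}) (u v w : 'I_n).

Definition three_uniform E : Prop := forall e, e \in E -> #|e| = 3.

Definition is_edge E u v w : bool := [set u; v; w] \in E.

Definition pair_deg E v w : nat := #|[set x | is_edge E v w x]|.

Fixpoint tight_edges E (s : seq 'I_n) : bool :=
  match s with
  | x :: ((y :: z :: _) as s') => is_edge E x y z && tight_edges E s'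
  | _ => true
  end.

Definition tight_path E (s : seq 'I_n) : bool :=
  (3 <= size s) && uniq s && tight_edges E s.

(* tight paths of length L (as vertex sequences x_1..x_{L+2}) connecting
   (x,y) and (w,z) with all internal vertices x_3..x_L in Rs *)
Definition conn_paths E (Rs : {set 'I_n}) (L : nat) (x y w z : 'I_n)
  : {set (L.+2).-tuple 'I_n} :=
  [set t : (L.+2).-tuple 'I_n |
     [&& tight_path E t,
         nth x t 0 == x, nth x t 1 == y,
         nth x t L == w, nth x t L.+1 == z &
         all (fun i => nth x t i \in Rs) (iota 2 (L - 2))]].

(* (x,alpha)-absorber with s = s(alpha); t lists
   (v_1,w_1,y_1,z_1,...,v_s,w_s,y_s,z_s); 0-based block index i *)
Definition absorber E (s : nat) (x : 'I_n) (t : (4 * s).-tuple 'I_n) : bool :=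
  let v i := nth x t (4 * i) in
  let w i := nth x t (4 * i + 1) in
  let y i := nth x t (4 * i + 2) in
  let z i := nth x t (4 * i + 3) in
  [&& uniq t,
      tight_path E [:: v 0; w 0; x; y 0; z 0],
      all (fun i => tight_path E [:: v i; w i; y i.+1; z i.+1]
                 && tight_path E [:: v i.+1; w i.+1; y i; z i])
          (iota 0 (s - 1)) &
      tight_path E [:: v (s - 1); w (s - 1); y (s - 1); z (s - 1)]].

Definition absorbers_outside E (Rs : {set 'I_n}) (s : nat) (x : 'I_n)
  : {set (4 * s).-tuple 'I_n} :=
  [set t | @absorber E s x t & all (fun u => u \notin Rs) t].

End Hyp.
Arguments absorber {n} E s x t.
Arguments conn_paths {n} E Rs L x y w z.
Arguments absorbers_outside {n} E Rs s x.
Arguments pair_deg {n} E v w.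
Arguments tight_path {n} E s.

(* The absorber is chosen greedily, vertex by vertex, with at least alpha n / 3
   choices at each of the 4s steps.  The vertices of block i are taken with value
   above level i = min (i alpha n / 2, n / 2); every pair that must later receive a
   common neighbour then has both values above level i - alpha n / 2, hence by the
   degree condition at least level i + alpha n / 2 common neighbours, and discarding
   the vertices of value at most level i, those of R and the O(s) used ones still
   leaves alpha n / 3.  From block 1/alpha on the level is n / 2, so two pairs of the
   final block have at least alpha n common neighbours: this supplies v_s and z_s,
   which each close two edges. *)

From mathcomp Require Import all_boot all_order all_algebra.
From mathcomp Require Import reals.
From mathcomp Require Import zify lra.
Set Implicit Arguments. Unset Strict Implicit. Unset Printing Implicit Defensive.
Import Order.TTheory GRing.Theory Num.Theory.
Local Open Scope ring_scope.

Section GreedyChoice.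
Variables (T : finType) (P : seq T -> T -> bool).

Fixpoint greedy (pre s : seq T) : bool :=
  if s is y :: s' then P pre y && greedy (rcons pre y) s' else true.

Lemma greedyP x0 pre s j : greedy pre s -> (j < size s)%N ->
  P (pre ++ take j s) (nth x0 s j).
Proof.
elim: s pre j => [|y s IHs] pre [|j] //= /andP[Py gs] ltjs; first by rewrite cats0.
by rewrite -cat_rcons; apply: IHs.
Qed.

Lemma card_greedy_cons m pre :
  #|[set t : m.+1.-tuple T | greedy pre t]| =
  (\sum_(y | P pre y) #|[set t : m.-tuple T | greedy (rcons pre y) t]|)%N.
Proof.
rewrite -sum1dep_card (reindex (fun p : T * m.-tuple T => [tuple of p.1 :: p.2])) /=.
  rewrite -(pair_big_dep (P pre) (fun y (t : m.-tuple T) => greedy (rcons pre y) t)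
                         (fun _ _ => 1%N)) /=.
  by apply: eq_bigr => y _; rewrite sum1dep_card.
exists (fun t : m.+1.-tuple T => (thead t, [tuple of behead t])) => [[y t] _|t _].
  by congr pair; apply: val_inj.
by rewrite [RHS]tuple_eta; apply: val_inj.
Qed.

Lemma card_greedy_ge (R : numDomainType) (c : R) m pre : 0 <= c ->
  (forall s, (size s < m)%N -> greedy pre s -> c <= #|[set y | P (pre ++ s) y]|%:R) ->
  c ^+ m <= #|[set t : m.-tuple T | greedy pre t]|%:R.
Proof.
move=> c_ge0; elim: m pre => [|m IHm] pre many_choices.
  rewrite expr0 (_ : [set t : 0.-tuple T | _] = setT) ?cardsT ?card_tuple //.
  by apply/setP => t; rewrite !inE tuple0.
rewrite card_greedy_cons natr_sum exprS.
have := many_choices [::] isT isT; rewrite cats0 => first_choices.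
apply: le_trans (ler_wpM2r (exprn_ge0 _ c_ge0) first_choices) _.
rewrite -sum1dep_card natr_sum mulr_suml; apply: ler_sum => y Py; rewrite mul1r.
apply: IHm => s lt_sm gs; rewrite cat_rcons; apply: many_choices => //=.
by rewrite Py.
Qed.

End GreedyChoice.

Lemma is_edge_rotr (n : nat) (E : {set {set 'I_n}}) a b c :
  is_edge E a b c = is_edge E c a b.
Proof.
rewrite /is_edge; congr (_ \in E); apply/setP => u; rewrite !inE.
by case: (u == a); case: (u == b); case: (u == c).
Qed.

Lemma tight_path4 (n : nat) (E : {set {set 'I_n}}) a b c d :
  is_edge E a b c -> is_edge E b c d -> uniq [:: a; b; c; d] ->
  tight_path E [:: a; b; c; d].
Proof. by move=> abc bcd uabcd; rewrite /tight_path uabcd /= abc bcd. Qed.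

Lemma tight_path5 (n : nat) (E : {set {set 'I_n}}) a b c d e :
  is_edge E a b c -> is_edge E b c d -> is_edge E c d e -> uniq [:: a; b; c; d; e] ->
  tight_path E [:: a; b; c; d; e].
Proof. by move=> abc bcd cde uabcde; rewrite /tight_path uabcde /= abc bcd cde. Qed.

Lemma uniq_nths (T : eqType) (x0 : T) s qs :
  uniq s -> uniq qs -> all (fun q => q < size s)%N qs -> uniq [seq nth x0 s q | q <- qs].
Proof.
move=> us uqs /allP qs_lt; rewrite map_inj_in_uniq // => q1 q2 /qs_lt lt1 /qs_lt lt2.
by move/eqP; rewrite nth_uniq // => /eqP.
Qed.

Section Absorbers.
Variables (R : realFieldType) (n : nat) (E : {set {set 'I_n}}) (Rs : {set 'I_n}).
Variables (x : 'I_n) (k : nat) (alpha : R).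

Local Notation N := (n%:R : R).
Local Notation m := (4 * (2 * k))%N.

Hypothesis k_ge2 : (2 <= k)%N.
Hypothesis alpha_k : alpha * k%:R = 1.
Hypothesis pair_deg_ge : forall a b : 'I_n, a != b ->
  Num.min (Num.min (a.+1)%:R (b.+1)%:R) (N / 2) + alpha * N <= (pair_deg E a b)%:R.
Hypothesis Rs_small : #|Rs|%:R + m%:R <= alpha * N / 6.

Lemma alpha_gt0 : 0 < alpha.
Proof. have : 2 <= k%:R :> R by rewrite ler_nat. by have := alpha_k; nra. Qed.

Lemma alpha_le_half : alpha <= 1 / 2.
Proof.
have : 2 <= k%:R :> R by rewrite ler_nat.
by have := alpha_k; have := alpha_gt0; nra.
Qed.

Lemma alphaN_ge0 : 0 <= alpha * N.
Proof. by rewrite mulr_ge0 ?ler0n // ltW // alpha_gt0. Qed.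

Definition label (u : 'I_n) : R := (u.+1)%:R.

Lemma label_ge0 u : 0 <= label u. Proof. exact: ler0n. Qed.

Definition level (i : nat) : R := Num.min (i%:R * (alpha * N / 2)) (N / 2).

Lemma level_ge0 i : 0 <= level i.
Proof.
have := alphaN_ge0; have : 0 <= N by rewrite ler0n.
by rewrite le_min => *; apply/andP; split; [apply: mulr_ge0; rewrite ?ler0n|]; lra.
Qed.

Lemma level_le_half i : level i <= N / 2.
Proof. by rewrite ge_min lexx orbT. Qed.

Lemma level0 : level 0 = 0.
Proof. by apply/eqP; rewrite eq_le level_ge0 ge_min mul0r lexx. Qed.

Lemma level_step i q : (i <= q.+1)%N -> level i <= level q + alpha * N / 2.
Proof.
move=> le_iq; rewrite /level; set c := alpha * N / 2.
have c_ge0 : 0 <= c by have := alphaN_ge0; rewrite /c; lra.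
have le_ic : i%:R * c <= q%:R * c + c.
  by rewrite -[X in _ + X]mul1r -mulrDl ler_wpM2r // natr1 ler_nat.
by rewrite -lerBlDr le_min !lerBlDr !ge_min le_ic lerDl c_ge0 !orbT.
Qed.

Lemma level_top i : (k <= i)%N -> level i = N / 2.
Proof.
move=> le_ki; apply/min_idPr; rewrite !mulrA.
have kaN : k%:R * alpha * N = N by rewrite (mulrC k%:R) alpha_k mul1r.
have : k%:R * (alpha * N) <= i%:R * (alpha * N) by rewrite ler_wpM2r ?alphaN_ge0 ?ler_nat.
rewrite !mulrA; lra.
Qed.

Definition nbhd (ps : seq ('I_n * 'I_n)) : {set 'I_n} :=
  [set u | all (fun p => is_edge E p.1 p.2 u) ps].

Definition pair_above (i : nat) (p : 'I_n * 'I_n) : bool :=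
  [&& p.1 != p.2, level i - alpha * N / 2 <= label p.1
                & level i - alpha * N / 2 <= label p.2].

Lemma card_nbhd_pair i p : pair_above i p -> level i + alpha * N / 2 <= #|nbhd [:: p]|%:R.
Proof.
case: p => a b /and3P[/= ab la lb].
have -> : nbhd [:: (a, b)] = [set u | is_edge E a b u].
  by apply/setP => u; rewrite !inE /= andbT.
apply: le_trans (pair_deg_ge ab); have := alphaN_ge0; have := level_le_half i.
have : level i - alpha * N / 2 <= Num.min (Num.min (a.+1)%:R (b.+1)%:R) (N / 2).
  by rewrite !le_min la lb /=; have := level_le_half i; have := alphaN_ge0; lra.
lra.
Qed.

Lemma card_setI_ge (A B : {set 'I_n}) : #|A|%:R + #|B|%:R - N <= #|A :&: B|%:R.
Proof.
have := cardsUI A B; have := max_card (A :|: B); rewrite card_ord -(ler_nat R).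
by move=> le_Un /(congr1 (GRing.natmul (1 : R))); rewrite !natrD; lra.
Qed.

Lemma card_nbhd_two i p q : (k <= i)%N -> pair_above i p -> pair_above i q ->
  alpha * N <= #|nbhd [:: p; q]|%:R.
Proof.
move=> le_ki /card_nbhd_pair Np /card_nbhd_pair Nq.
have -> : nbhd [:: p; q] = nbhd [:: p] :&: nbhd [:: q].
  by apply/setP => u; rewrite !inE /= !andbT.
by apply: le_trans (card_setI_ge _ _); move: Np Nq; rewrite level_top //; lra.
Qed.

Lemma card_label_le T : 0 <= T -> #|[set u | label u <= T]|%:R <= T.
Proof.
move=> T_ge0; set S := [set u | label u <= T].
pose M := (\max_(u in S) u.+1)%N.
have le_MT : M%:R <= T.
  by elim/big_ind: M => // [a b|u]; [rewrite /maxn; case: ifP | rewrite inE].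
apply: le_trans le_MT; rewrite ler_nat cardE -(size_map val) -(size_iota 0 M).
apply: uniq_leq_size; first by rewrite (map_inj_uniq val_inj) enum_uniq.
move=> v /mapP[u]; rewrite mem_enum => uS ->; rewrite mem_iota /=.
exact: (@leq_bigmax_cond _ (mem S) (fun u : 'I_n => u.+1) u uS).
Qed.

Definition fresh (pre : seq 'I_n) (u : 'I_n) : bool := [&& u \notin Rs, u \notin pre & u != x].

Lemma card_fresh_above (A : {set 'I_n}) pre T : 0 <= T -> (size pre < m)%N ->
  T + alpha * N / 2 <= #|A|%:R ->
  alpha * N / 3 <= #|[set u in A | fresh pre u && (T < label u)]|%:R.
Proof.
move=> T_ge0 lt_pre_m A_large; set C := [set u in A | _].
have := card_label_le T_ge0; set low := [set u | label u <= T] => card_low.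
have sub_A : A \subset C :|: Rs :|: [set u in pre] :|: [set x] :|: low.
  apply/subsetP => u uA; rewrite !inE uA /fresh ltNge.
  by case: (u \in Rs); case: (u \in pre); case: (u == x); case: (label u <= T).
have card_pre : (#|[set u in pre]| + 1 <= m)%N.
  by rewrite addn1 cardsE; apply: leq_ltn_trans (card_size pre) lt_pre_m.
have le_A : (#|A| <= #|C| + #|Rs| + #|[set u in pre]| + #|[set x]| + #|low|)%N.
  apply: leq_trans (subset_leq_card sub_A) _.
  by do 4!(apply: leq_trans (leq_card_setU _ _).1 _; rewrite leq_add2r).
move: le_A card_pre; rewrite cards1 -!(ler_nat R) !natrD.
have := Rs_small; lra.
Qed.

(* In a choice sequence, position 4i+r (r = 0, 1, 2, 3) holds the vertex y_i, w_i,
   v_i, z_i of the absorber: in this order every vertex comes after all the vertices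
   it shares an edge with.  [links s i r] lists the pairs (a, b) with which the vertex
   chosen for that position must form an edge. *)
Definition links (s : seq 'I_n) (i r : nat) : seq ('I_n * 'I_n) :=
  let y q := nth x s (4 * q)%N in
  let w q := nth x s (4 * q + 1)%N in
  let v q := nth x s (4 * q + 2)%N in
  let z q := nth x s (4 * q + 3)%N in
  let last := if i == (2 * k).-1%N then [:: (w i, y i)] else [::] in
  if i == 0 then
    match r with 0 => [::] | 1 => [:: (x, y 0)] | 2 => [:: (w 0, x)] | _ => [:: (x, y 0)] end
  else
    match r with
    | 0 => [:: (v i.-1, w i.-1)]
    | 1 => [:: (y i.-1, z i.-1)]
    | 2 => (w i, y i.-1) :: last
    | _ => (w i.-1, y i) :: last
    end.

(* The last two vertices of the final block belong to no pair of [links], so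
   they need no lower bound on their value; all others must lie above the level of
   their block. *)
Definition exempt (j : nat) : bool := ((j %/ 4 == (2 * k).-1) && (2 <= j %% 4))%N.

Definition threshold (j : nat) : R := if exempt j then 0 else level (j %/ 4)%N.

Definition admissible (pre : seq 'I_n) (u : 'I_n) : bool :=
  [&& fresh pre u, threshold (size pre) < label u
    & u \in nbhd (links pre (size pre %/ 4)%N (size pre %% 4)%N)].

Definition chosen (s : seq 'I_n) : bool := greedy admissible [::] s.

Lemma links_take s j i r : (4 * i + r <= j)%N -> links (take j s) i r = links s i r.
Proof.
rewrite /links; case: eqP => [->|i_neq0]; case: r => [|[|[|r]]] le_j //=;
  rewrite ?nth_take //; lia.
Qed.

Lemma chosenP s q : chosen s -> (q < size s)%N -> admissible (take q s) (nth x s q).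
Proof. exact: greedyP. Qed.

Lemma chosen_uniq s : chosen s -> uniq (x :: s).
Proof.
suff ext_uniq pre : greedy admissible pre s -> uniq (x :: pre) -> uniq (x :: pre ++ s).
  by move/ext_uniq; apply.
elim: s pre => [|y s IHs] pre /=; first by rewrite cats0.
case/andP=> /and3P[/and3P[_ y_pre y_x] _ _] /IHs; rewrite cat_rcons => ext_y.
case/andP=> x_pre u_pre; apply: ext_y.
by rewrite /= mem_rcons rcons_uniq !inE negb_or eq_sym y_x x_pre y_pre u_pre.
Qed.

Lemma chosen_label s q : chosen s -> (q < size s)%N -> threshold q < label (nth x s q).
Proof.
by move=> cs lt_qs; case/and3P: (chosenP cs lt_qs) => _; rewrite size_take lt_qs.
Qed.

Lemma chosen_links s i r : chosen s -> (r < 4)%N -> (4 * i + r < size s)%N ->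
  nth x s (4 * i + r) \in nbhd (links s i r).
Proof.
move=> cs lt_r4 lt_js; case/and3P: (chosenP cs lt_js) => _ _; rewrite size_take lt_js.
have [-> ->] : ((4 * i + r) %/ 4 = i /\ (4 * i + r) %% 4 = r)%N by split; lia.
by rewrite links_take.
Qed.

Lemma chosen_label_above s i q : chosen s -> (q < size s)%N -> ~~ exempt q ->
  (i <= (q %/ 4).+1)%N -> level i - alpha * N / 2 <= label (nth x s q).
Proof.
move=> cs lt_qs not_exempt /level_step.
by have := chosen_label cs lt_qs; rewrite /threshold (negbTE not_exempt); lra.
Qed.

Lemma links_above s i r : chosen s -> size s = (4 * i + r)%N -> (r < 4)%N ->
  (i < 2 * k)%N -> all (pair_above i) (links s i r).
Proof.
move=> cs size_s lt_r4 lt_ik.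
have above q : (q < size s)%N -> ((q %/ 4).+1 < 2 * k)%N || (q %% 4 < 2)%N ->
    (i <= (q %/ 4).+1)%N -> level i - alpha * N / 2 <= label (nth x s q).
  by move=> lt_qs not_exempt; apply: chosen_label_above; rewrite /exempt //; lia.
have neq q1 q2 : (q1 < size s)%N -> (q2 < size s)%N -> q1 != q2 -> nth x s q1 != nth x s q2.
  by move=> lt1 lt2; rewrite nth_uniq //; case/andP: (chosen_uniq cs).
have x_neq q : (q < size s)%N -> x != nth x s q.
  move=> lt_qs; case/andP: (chosen_uniq cs) => x_s _.
  by apply: contraNneq x_s => ->; rewrite mem_nth.
rewrite /links /pair_above; case: eqP => [i0|i_neq0].
  have low u : level i - alpha * N / 2 <= label u.
    by rewrite i0 level0 sub0r; have := label_ge0 u; have := alphaN_ge0; lra.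
  by case: r size_s lt_r4 => [|[|[|[|r]]]] //= size_s _;
    rewrite !low ?x_neq 1?eq_sym ?x_neq //; lia.
case: r size_s lt_r4 => [|[|[|[|r]]]] //= size_s _; try case: ifP => //= last;
  rewrite !andbT ?neq ?above //; lia.
Qed.

Lemma size_links s i r : (r < 4)%N ->
  (size (links s i r) <= (if exempt (4 * i + r) then 2 else 1))%N.
Proof.
move=> lt_r4; rewrite /links /exempt.
have [-> ->] : ((4 * i + r) %/ 4 = i /\ (4 * i + r) %% 4 = r)%N by split; lia.
by case: eqP => [->|i_neq0]; case: r lt_r4 => [|[|[|[|r]]]] //= _; case: eqP => //=; lia.
Qed.

Lemma card_nbhd_links s : chosen s -> (size s < m)%N ->
  threshold (size s) + alpha * N / 2
    <= #|nbhd (links s (size s %/ 4)%N (size s %% 4)%N)|%:R.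
Proof.
move=> cs lt_sm; set i := (size s %/ 4)%N; set r := (size s %% 4)%N.
have size_s : size s = (4 * i + r)%N by rewrite /i /r; lia.
have lt_r4 : (r < 4)%N by rewrite /r; lia.
have /allP above := links_above cs size_s lt_r4 (ltac:(rewrite /i; lia) : (i < 2 * k)%N).
have le_thr : threshold (4 * i + r) <= level i.
  rewrite /threshold; case: ifP => _; rewrite ?level_ge0 //.
  by have -> : ((4 * i + r) %/ 4 = i)%N by lia.
have := size_links s i lt_r4; rewrite size_s.
case: (links s i r) above => [|p [|q [|? ?]]] //= above.
- move=> _; have -> : nbhd [::] = setT by apply/setP => u; rewrite !inE.
  rewrite cardsT card_ord; have := level_le_half i; have := alpha_le_half.
  have : 0 <= N by rewrite ler0n.
  nra.
- by move=> _; apply: le_trans (card_nbhd_pair (above p (mem_head _ _))); lra.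
- case: ifP => // exempt_j _; rewrite /threshold exempt_j add0r.
  have le_ki : (k <= i)%N by move: exempt_j; rewrite /exempt; lia.
  have q_in : q \in [:: p; q] by rewrite mem_seq2 eqxx orbT.
  have := card_nbhd_two le_ki (above p (mem_head _ _)) (above q q_in).
  by have := alphaN_ge0; lra.
- by case: ifP.
Qed.

Lemma card_admissible s : chosen s -> (size s < m)%N ->
  alpha * N / 3 <= #|[set u | admissible s u]|%:R.
Proof.
move=> cs lt_sm; have thr_ge0 : 0 <= threshold (size s).
  by rewrite /threshold; case: ifP; rewrite ?level_ge0.
apply: le_trans (card_fresh_above thr_ge0 lt_sm (card_nbhd_links cs lt_sm)) _.
rewrite ler_nat; apply: subset_leq_card; apply/subsetP => u.
by rewrite /admissible !inE => /andP[-> /andP[-> ->]].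
Qed.

Definition swap_vy (j : nat) : nat :=
  (if j %% 4 == 0 then j + 2 else if j %% 4 == 2 then j - 2 else j)%N.

Lemma swap_vyK : involutive swap_vy.
Proof. by move=> j; rewrite /swap_vy; do ?case: ifP; lia. Qed.

Lemma swap_vy_lt j : (j < m)%N -> (swap_vy j < m)%N.
Proof. by rewrite /swap_vy; do ?case: ifP; lia. Qed.

Definition absorber_of (c : m.-tuple 'I_n) : m.-tuple 'I_n :=
  [tuple nth x c (swap_vy j) | j < m].

Lemma nth_absorber_of c j : (j < m)%N -> nth x (absorber_of c) j = nth x c (swap_vy j).
Proof. by move=> lt_jm; rewrite -[j]/(val (Ordinal lt_jm)) nth_mktuple. Qed.

Lemma absorber_ofK : involutive absorber_of.
Proof.
move=> c; apply: val_inj; apply: (@eq_from_nth _ x) => [|j]; rewrite !size_tuple // => lt_jm.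
by rewrite !nth_absorber_of ?swap_vy_lt ?swap_vyK.
Qed.

Section ChosenAbsorber.
Variable c : m.-tuple 'I_n.
Hypothesis c_chosen : chosen c.

Local Notation t := (absorber_of c).

Lemma nth_absorber_block i : (i < 2 * k)%N ->
  [/\ nth x t (4 * i) = nth x c (4 * i + 2), nth x t (4 * i + 1) = nth x c (4 * i + 1),
      nth x t (4 * i + 2) = nth x c (4 * i) & nth x t (4 * i + 3) = nth x c (4 * i + 3)]%N.
Proof.
by move=> lt_ik; split; rewrite nth_absorber_of /swap_vy; try lia; congr nth; do ?case: ifP; lia.
Qed.

Lemma chosen_edges i r : (r < 4)%N -> (4 * i + r < m)%N ->
  all (fun p => is_edge E p.1 p.2 (nth x c (4 * i + r))) (links c i r).
Proof.
move=> lt_r4 lt_jm; have := chosen_links (i := i) c_chosen lt_r4.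
by rewrite size_tuple => /(_ lt_jm); rewrite inE.
Qed.

Lemma uniq_chosen_nths qs : uniq qs -> all (fun q => q < m)%N qs ->
  uniq [seq nth x c q | q <- qs].
Proof.
by move=> uqs lt_qs; apply: uniq_nths; rewrite ?size_tuple //; case/andP: (chosen_uniq c_chosen).
Qed.

Lemma absorber_first_path :
  tight_path E [:: nth x t (4 * 0); nth x t (4 * 0 + 1); x; nth x t (4 * 0 + 2);
                   nth x t (4 * 0 + 3)].
Proof.
have [-> -> -> ->] := nth_absorber_block (ltac:(lia) : (0 < 2 * k)%N).
have /= /andP[w0 _] := chosen_edges (i := 0) (r := 1) isT (ltac:(lia)).
have /= /andP[v0 _] := chosen_edges (i := 0) (r := 2) isT (ltac:(lia)).
have /= /andP[z0 _] := chosen_edges (i := 0) (r := 3) isT (ltac:(lia)).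
rewrite is_edge_rotr in w0; rewrite is_edge_rotr in v0.
apply: (tight_path5 v0 w0 z0).
(* In [x :: c], the vertex x sits at index 0 and entry q of c at index q.+1. *)
have := @uniq_nths _ x (x :: c) [:: (4 * 0 + 2).+1; (4 * 0 + 1).+1; 0; (4 * 0).+1; (4 * 0 + 3).+1].
by apply; rewrite ?chosen_uniq //= ?size_tuple; lia.
Qed.

Lemma absorber_middle_paths i : (i.+1 < 2 * k)%N ->
  tight_path E [:: nth x t (4 * i); nth x t (4 * i + 1);
                   nth x t (4 * i.+1 + 2); nth x t (4 * i.+1 + 3)]
  && tight_path E [:: nth x t (4 * i.+1); nth x t (4 * i.+1 + 1);
                      nth x t (4 * i + 2); nth x t (4 * i + 3)].
Proof.
move=> lt_ik; have [-> -> -> ->] := nth_absorber_block (ltac:(lia) : (i < 2 * k)%N).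
have [-> -> -> ->] := nth_absorber_block lt_ik.
have /= /andP[y1 _] := chosen_edges (i := i.+1) (r := 0) isT (ltac:(lia)).
have /= /andP[w1 _] := chosen_edges (i := i.+1) (r := 1) isT (ltac:(lia)).
have /= /andP[v1 _] := chosen_edges (i := i.+1) (r := 2) isT (ltac:(lia)).
have /= /andP[z1 _] := chosen_edges (i := i.+1) (r := 3) isT (ltac:(lia)).
rewrite addn0 in y1; rewrite is_edge_rotr in w1; rewrite is_edge_rotr in v1.
apply/andP; split; [apply: (tight_path4 y1 z1) | apply: (tight_path4 v1 w1)].
  have := @uniq_chosen_nths [:: 4 * i + 2; 4 * i + 1; 4 * i.+1; 4 * i.+1 + 3]%N.
  by apply; rewrite /= ?inE; lia.
have := @uniq_chosen_nths [:: 4 * i.+1 + 2; 4 * i.+1 + 1; 4 * i; 4 * i + 3]%N.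
by apply; rewrite /= ?inE; lia.
Qed.

Lemma absorber_last_path (p := (2 * k).-1) :
  tight_path E [:: nth x t (4 * p); nth x t (4 * p + 1); nth x t (4 * p + 2);
                   nth x t (4 * p + 3)].
Proof.
have lt_pk : (p < 2 * k)%N by rewrite /p; lia.
have [-> -> -> ->] := nth_absorber_block lt_pk.
have p_neq0 : (p == 0) = false by rewrite /p; lia.
have := chosen_edges (i := p) (r := 2) isT (ltac:(lia)).
rewrite /links p_neq0 eqxx /= => /and3P[_ + _]; rewrite is_edge_rotr => v_last.
have := chosen_edges (i := p) (r := 3) isT (ltac:(lia)).
rewrite /links p_neq0 eqxx /= => /and3P[_ z_last _].
apply: (tight_path4 v_last z_last).
have := @uniq_chosen_nths [:: 4 * p + 2; 4 * p + 1; 4 * p; 4 * p + 3]%N.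
by apply; rewrite /= ?inE; lia.
Qed.

Lemma chosen_absorber : t \in absorbers_outside E Rs (2 * k) x.
Proof.
have [_ uc] := andP (chosen_uniq c_chosen).
rewrite inE; apply/andP; split; last first.
  apply/allP => u /(nthP x)[j]; rewrite size_tuple => lt_jm <-.
  have lt_sjm : (swap_vy j < size c)%N by rewrite size_tuple swap_vy_lt.
  by rewrite nth_absorber_of //; case/and3P: (chosenP c_chosen lt_sjm) => /and3P[].
apply/and4P; split.
- apply/(uniqP x) => j1 j2; rewrite !inE size_tuple => lt1 lt2.
  rewrite !nth_absorber_of // => /eqP; rewrite nth_uniq ?size_tuple ?swap_vy_lt //.
  by move=> /eqP/(congr1 swap_vy); rewrite !swap_vyK.
- exact: absorber_first_path.
- by apply/allP => i; rewrite mem_iota => /andP[_ lt_i]; apply: absorber_middle_paths; lia.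
- by rewrite subn1; apply: absorber_last_path.
Qed.

End ChosenAbsorber.

Lemma card_absorbers_outside :
  (alpha * N / 3) ^+ m <= #|absorbers_outside E Rs (2 * k) x|%:R.
Proof.
have aN3_ge0 : 0 <= alpha * N / 3 by have := alphaN_ge0; lra.
apply: le_trans (card_greedy_ge aN3_ge0 (fun s lt_sm cs => card_admissible cs lt_sm)) _.
rewrite ler_nat -(card_imset _ (inv_inj absorber_ofK)).
apply: subset_leq_card; apply/subsetP => a /imsetP[c]; rewrite inE => cs ->.
exact: chosen_absorber.
Qed.

End Absorbers.

Theorem lemma5p2 (R : realType) :
  exists alpha0 : R, 0 < alpha0 /\
  forall (alpha : R) (k : nat),
    0 < alpha -> alpha <= alpha0 -> alpha^-1 = k%:R ->
    (* s(alpha) = 2/alpha = 2k *)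
    exists theta0 : R, 0 < theta0 /\
    forall theta : R, 0 < theta -> theta <= theta0 ->
    exists n0 : nat, forall n : nat, (n0 <= n)%N ->
    forall (E : {set {set 'I_n}}),
      three_uniform E ->
      (forall i j : 'I_n, i != j ->
         (pair_deg E i j)%:R >=
           Num.min (Num.min (i.+1)%:R (j.+1)%:R) (n%:R / 2) + alpha * n%:R) ->
    forall Rs : {set 'I_n},
      theta ^+ 2 / 2 * n%:R <= #|Rs|%:R ->
      #|Rs|%:R <= theta ^+ 2 * n%:R ->
      (exists L : nat, (0 < L)%N /\
         forall x y w z : 'I_n,
           x != y -> w != z -> x != w -> x != z -> y != w -> y != z ->
           theta * (#|Rs|%:R ^ (L%:Z - 2)) / 2
             <= #|conn_paths E Rs L x y w z|%:R) ->
    forall x : 'I_n,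
      (alpha * n%:R / 3) ^+ (4 * (2 * k))
        <= #|absorbers_outside E Rs (2 * k) x|%:R.
Proof.
exists (1 / 2); split; first lra.
move=> alpha k alpha_gt0 alpha_le alpha_inv.
have alpha_k : alpha * k%:R = 1 by rewrite -alpha_inv mulfV ?gt_eqF.
have k_ge2 : (2 <= k)%N by rewrite -(ler_nat R); nra.
exists (alpha / 4); split; first lra.
move=> theta theta_gt0 theta_le; exists (100 * k * k)%N.
move=> n le_n0 E _ deg_ge Rs _ Rs_le _ x.
have n_ge : 100 * k%:R * k%:R <= n%:R :> R by rewrite -!natrM ler_nat.
have aN_ge : 100 * k%:R <= alpha * n%:R.
  have := ler_wpM2l (ltW alpha_gt0) n_ge.
  by rewrite mulrA mulrCA mulrA -mulrA alpha_k mulr1 mulrC.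
have theta2 : theta ^+ 2 <= alpha / 32.
  have : theta * theta <= alpha / 4 * (alpha / 4) by apply: ler_pM; lra.
  have : alpha * alpha <= alpha * (1 / 2) by apply: ler_wpM2l; lra.
  by rewrite expr2; lra.
have theta2N := ler_wpM2r (ler0n R n) theta2.
apply: card_absorbers_outside => //; rewrite natrM natrM.
have : 0 <= k%:R :> R by rewrite ler0n.
lra.
Qed.
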